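(* Let $\mathcal{C}$ be a covering of a finite set $E$. For $x\in E$ let $N(x)=\bigcap\{K\in\mathcal{C}:x\in K\}$, and define $XH:2^E\to 2^E$ by $XH(X)=\{x\in E:N(x)\cap X\neq\emptyset\}$. Then $\{N(x):x\in E\}$ forms a partition of $E$ if and only if $XH$ is the closure operator of some matroid on $E$.
   Context: A covering of $E$ is a family of nonempty subsets of $E$ with union $E$. ''$\{N(x):x\in E\}$ forms a partition'' means that the distinct sets among the $N(x)$ are pairwise disjoint (their union is $E$ since $x\in N(x)$). The closure operator of a matroid with rank function $r$ is $cl(X)=\{a\in E:r(X\cup\{a\})=r(X)\}$. *)

(* The finite ground set E is modelled as a finType T. *)
From mathcomp Require Import all_boot.
Set Implicit Arguments. Unset Strict Implicit. Unset Printing Implicit Defensive.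

Section Defs.
Variable T : finType.

Definition covering (C : {set {set T}}) : Prop :=
  (forall K, K \in C -> K != set0) /\ \bigcup_(K in C) K = [set: T].

Definition Nset (C : {set {set T}}) (x : T) : {set T} :=
  \bigcap_(K in C | x \in K) K.

Definition XH (C : {set {set T}}) (X : {set T}) : {set T} :=
  [set x | Nset C x :&: X != set0].

Definition N_partition (C : {set {set T}}) : Prop :=
  forall x y : T, Nset C x != Nset C y -> [disjoint Nset C x & Nset C y].

Definition matroid_rank (r : {set T} -> nat) : Prop :=
  [/\ forall X : {set T}, r X <= #|X|,
      forall X Y : {set T}, X \subset Y -> r X <= r Y &
      forall X Y : {set T}, r (X :|: Y) + r (X :&: Y) <= r X + r Y].

Definition mclosure (r : {set T} -> nat) (X : {set T}) : {set T} :=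
  [set a | r (a |: X) == r X].

End Defs.

(* Both conditions say that z ∈ N(x) is a symmetric relation.  If the N(x)
   partition E, then XH is the closure operator of the partition matroid whose
   rank counts the blocks N(x) met by a set.  Conversely, in any matroid an
   element x of cl{z} that is not a loop has z ∈ cl{x}; since XH(∅) = ∅ and
   x ∈ XH{z} means z ∈ N(x), the relation z ∈ N(x) is symmetric, so the sets
   N(x) are the classes of an equivalence relation. *)
From mathcomp Require Import all_boot.

Section MatroidRank.
Variable T : finType.
Implicit Types (r : {set T} -> nat) (X : {set T}).

Lemma matroid_rank_imset (aT : finType) (f : T -> aT) :
  matroid_rank (fun X => #|f @: X|).
Proof.
split=> [X | X Y XY | X Y]; first exact: leq_imset_card.
  exact/subset_leq_card/imsetS.
rewrite imsetU -(cardsUI (f @: X)) leq_add2l subset_leq_card //.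
by rewrite subsetI !imsetS ?subsetIl ?subsetIr.
Qed.

Lemma mclosure_imset (aT : finType) (f : T -> aT) X :
  mclosure (fun X => #|f @: X|) X = [set a | f a \in f @: X].
Proof.
apply/setP=> a; rewrite !inE imsetU1 cardsU1.
by case: (f a \in f @: X); rewrite ?add0n ?eqxx // add1n (gtn_eqF (ltnSn _)).
Qed.

Variable r : {set T} -> nat.
Hypothesis r_matroid : matroid_rank r.

Lemma rank_set0 : r set0 = 0.
Proof. by case: r_matroid => /(_ set0); rewrite cards0 leqn0 => /eqP. Qed.

Lemma rank_set1_le1 x : r [set x] <= 1.
Proof. by case: r_matroid => /(_ [set x]); rewrite cards1. Qed.

(* x and z are parallel: both singletons and the pair have rank 1. *)
Lemma mclosure_set1_sym x z :
  x \in mclosure r [set z] -> x \notin mclosure r set0 ->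
  z \in mclosure r [set x].
Proof.
rewrite !inE setU0 rank_set0 => /eqP rxz rx.
have rx1 : r [set x] = 1 by case: (r _) rx (rank_set1_le1 x) => [|[|]].
have rz1 : r [set z] = 1.
  case: r_matroid => _ /(_ [set x] (x |: [set z])) + _; rewrite subsetUl rxz rx1.
  by case: (r _) (rank_set1_le1 z) => [|[|]] // _ /(_ isT).
by rewrite setUC rxz rx1 rz1.
Qed.

End MatroidRank.

Section Neighbourhoods.
Variables (T : finType) (C : {set {set T}}).

Lemma mem_Nset_self x : x \in Nset C x.
Proof. by apply/bigcapP => K /andP[]. Qed.

Lemma Nset_subset {x y} : y \in Nset C x -> Nset C y \subset Nset C x.
Proof.
move=> /bigcapP yx; apply/subsetP=> w /bigcapP wy.
by apply/bigcapP=> K /andP[KC xK]; apply: wy; rewrite KC yx ?KC.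
Qed.

Lemma XH_set0 : XH C set0 = set0.
Proof. by apply/setP=> x; rewrite !inE setI0 eqxx. Qed.

Lemma XH_set1 x z : (x \in XH C [set z]) = (z \in Nset C x).
Proof.
rewrite inE; apply/set0Pn/idP => [[w] | zx].
  by rewrite !inE => /andP[wx /eqP <-].
by exists z; rewrite !inE zx /=.
Qed.

Lemma XH_N_partition X :
  N_partition C -> XH C X = [set a | Nset C a \in Nset C @: X].
Proof.
move=> partN; apply/setP=> a; rewrite !inE; apply/set0Pn/imsetP.
  case=> w; rewrite inE => /andP[wa wX]; exists w => //.
  apply: contraTeq (mem_Nset_self w) => /partN /disjointFr.
  by move=> /(_ w wa) ->.
by case=> w wX ->; exists w; rewrite inE wX mem_Nset_self.
Qed.

Lemma N_partition_sym :
  (forall x z, z \in Nset C x -> x \in Nset C z) -> N_partition C.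
Proof.
move=> symN.
have eqN x z : z \in Nset C x -> Nset C x = Nset C z.
  move=> zx; apply/eqP.
  by rewrite eqEsubset (Nset_subset zx) (Nset_subset (symN _ _ zx)).
move=> x y; apply: contraR => /pred0Pn [z /andP[zx zy]].
by rewrite (eqN _ _ zx) (eqN _ _ zy).
Qed.

End Neighbourhoods.

Theorem theorem10 (T : finType) (C : {set {set T}}) :
  covering C ->
  (N_partition C <->
   exists r : {set T} -> nat, matroid_rank r /\ forall X, XH C X = mclosure r X).
Proof.
move=> _; split=> [partN | [r [r_matroid XH_cl]]].
  exists (fun X : {set T} => #|Nset C @: X|); split; first exact: matroid_rank_imset.
  by move=> X; rewrite mclosure_imset XH_N_partition.
apply: N_partition_sym => x z.
rewrite -!XH_set1 !XH_cl => zx; apply: mclosure_set1_sym => //.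
by rewrite -XH_cl XH_set0 inE.
Qed.
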